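(* Let $G$ be a finite group, $\alpha \in \mathbb{Z}_{\geq 0}$, and let $K(G,\alpha)$ be the near-group fusion ring. All irreducible NIM-reps $(A,M)$ over $K(G,\alpha)$ whose basis $M$ consists of exactly two $G$-orbits, $M=\{m^1_k\}_{1\leq k\leq |G:H_1|}\cup\{m^2_k\}_{1\leq k\leq |G:H_2|}$ with the orbits governed by subgroups $H_1,H_2\subseteq G$, are parametrised by tuples $(H_1,H_2,c_{1,1},c_{2,2})$, where $H_1,H_2\subseteq G$ are subgroups and $c_{1,1},c_{2,2}\in \mathbb{Z}_{\geq0}$, satisfying the conditions \begin{itemize} \item $\alpha = c_{1,1}|G:H_1| + c_{2,2}|G:H_2|$, \item $|G|$ divides $|H_1||H_2|$, and \item $\frac{|H_1||H_2|}{|G|}+ c_{1,1}c_{2,2}$ is a square number. \end{itemize} For such a tuple, the action of the non-invertible element $X$ is given by \begin{align*} X \vartriangleright m^1_i &= c_{1,1}\sum_{k=1}^{|G:H_1|}m^1_k + \sqrt{\tfrac{|H_1||H_2|}{|G|} + c_{1,1}c_{2,2}}\sum_{k=1}^{|G:H_2|}m^2_k,\\ X \vartriangleright m^2_i &= \sqrt{\tfrac{|H_1||H_2|}{|G|} + c_{1,1}c_{2,2}}\sum_{k=1}^{|G:H_1|}m^1_k + c_{2,2}\sum_{k=1}^{|G:H_2|}m^2_k, \end{align*} i.e. $c_{1,2}=c_{2,1}=\sqrt{\frac{|H_1||H_2|}{|G|} + c_{1,1}c_{2,2}}$.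
   Context: The near-group fusion ring $K(G,\alpha)$ is the integer span of $G\cup\{X\}$, with group elements multiplying by the group operation, $Xg=gX=X$ for $g\in G$, $X^2=\sum_{g\in G} g+\alpha X$, and $X^*=X$. A NIM-rep is a $\mathbb{Z}_+$-module $(A,M)$ over the fusion ring with symmetric bilinear form $(m_l,m_k)=\delta_{l,k}$ satisfying $(b\vartriangleright m_l,m_k)=(m_l,b^*\vartriangleright m_k)$. The group elements act on the basis $M$ by a $G$-action, partitioning $M$ into $G$-orbits, each isomorphic to a left coset set $G/H_i$ for a subgroup $H_i$. For orbit labels $i,j$, $c_{i,j}:=(X\vartriangleright m^i_l,m^j_k)$, which is independent of $l,k$ and symmetric in $i,j$, so that $X\vartriangleright m^i_l=\sum_j c_{i,j}\sum_k m^j_k$. *)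

From mathcomp Require Import all_boot all_fingroup.
Set Implicit Arguments. Unset Strict Implicit. Unset Printing Implicit Defensive.
Local Open Scope group_scope.

(* The near-group fusion ring K(G,alpha), G = the whole finite group gT.
   Basis: option gT, with [Some g] the group element g and [None] = X. *)

(* Structure constants N_{a,b}^c of K(G,alpha): a * b = sum_c N a b c * c. *)
Definition ng_N (gT : finGroupType) (alpha : nat) (a b c : option gT) : nat :=
  match a, b with
  | Some g, Some h => nat_of_bool (c == Some (g * h))
  | Some _, None | None, Some _ => nat_of_bool (c == None)
  | None, None => if c is Some _ then 1%N else alpha
  end.

Definition ng_dual (gT : finGroupType) (a : option gT) : option gT :=
  match a with Some g => Some g^-1 | None => None end.

(* A Z_+-module over K(G,alpha) with basis T (orthonormal for the form):
   rho b k l = (b |> m_k, m_l), i.e. b |> m_k = sum_l rho b k l * m_l. *)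
Record isNIMrep (gT : finGroupType) (alpha : nat) (T : finType)
    (rho : option gT -> T -> T -> nat) : Prop := {
  nim_unit : forall k l, rho (Some 1) k l = nat_of_bool (k == l);
  (* (a b) |> m_k = a |> (b |> m_k) *)
  nim_mul : forall a b k l,
    (\sum_(c : option gT) ng_N alpha a b c * rho c k l)%N
    = (\sum_(j : T) rho b k j * rho a j l)%N;
  nim_adj : forall b k l, rho b k l = rho (ng_dual b) l k
}.

Definition NIM_irreducible (gT : finGroupType) (T : finType)
    (rho : option gT -> T -> T -> nat) : Prop :=
  (0 < #|T|)%N /\
  forall S : {set T},
    (forall b k l, k \in S -> rho b k l != 0%N -> l \in S) ->
    S = set0 \/ S = setT.

Definition G_orb (gT : finGroupType) (T : finType)
    (rho : option gT -> T -> T -> nat) (k l : T) : bool :=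
  [exists g : gT, rho (Some g) k l != 0%N].

Definition G_stab (gT : finGroupType) (T : finType)
    (rho : option gT -> T -> T -> nat) (k : T) : {set gT} :=
  [set g : gT | rho (Some g) k k != 0%N].

Definition two_orbits (gT : finGroupType) (T : finType)
    (rho : option gT -> T -> T -> nat) (m1 m2 : T) : Prop :=
  ~~ G_orb rho m1 m2 /\ forall k, G_orb rho m1 k || G_orb rho m2 k.

Definition X_action_is (gT : finGroupType) (T : finType)
    (rho : option gT -> T -> T -> nat) (m1 : T) (c11 c12 c22 : nat) : Prop :=
  forall k l, rho None k l =
    if G_orb rho m1 k then (if G_orb rho m1 l then c11 else c12)
    else (if G_orb rho m1 l then c12 else c22).

From mathcomp Require Import all_boot all_fingroup.
From mathcomp Require Import zify.
Set Implicit Arguments. Unset Strict Implicit. Unset Printing Implicit Defensive.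

(* The group elements act on the basis by permutations: the matrix of g has
   entries in nat and its transpose, the matrix of g^-1, is its inverse.  Since
   X g = g X = X, the matrix of X is constant on products of orbits, so with two
   orbits G/H1 and G/H2 it is given by c11, c12 = c21 and c22, and irreducibility
   means c12 > 0.  The axiom X^2 = \sum_g g + alpha X reduces to its entries at
   orbit representatives, where \sum_g g contributes |H_i| on the diagonal blocks
   and 0 off them.  With n_i = |G : H_i|, the off-diagonal entry divided by c12
   gives alpha = c11 n1 + c22 n2; the (1,1) entry then reads
   |H1| = n2 (c12^2 - c11 c22), so |H1| |H2| = (c12^2 - c11 c22) |G|.  Conversely
   these conditions give back all entries of X^2, and the permutation module on
   G/H1 + G/H2 with block-constant X realises every admissible tuple. *)

Lemma big_option (R : Type) (idx : R) (op : Monoid.com_law idx) (T : finType)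
    (F : option T -> R) :
  \big[op/idx]_(c : option T) F c = op (F None) (\big[op/idx]_(g : T) F (Some g)).
Proof.
rewrite (bigD1 None) //=; congr (op _ _).
rewrite (reindex_omap Some id) /=; last by case.
by apply: eq_bigl => g; rewrite eqxx.
Qed.

Lemma sum_pred1_muln (T : finType) (x : T) (F : T -> nat) :
  (\sum_j (j == x) * F j = F x)%N.
Proof.
rewrite (bigD1 x) //= eqxx mul1n big1 ?addn0 // => j /negbTE ->.
exact: mul0n.
Qed.

Lemma sum_ng_N (gT : finGroupType) (alpha : nat) (a b : option gT)
    (F : option gT -> nat) :
  (\sum_c ng_N alpha a b c * F c =
   match a, b with
   | Some g, Some h => F (Some (g * h)%g)
   | None, None => \sum_g F (Some g) + alpha * F None
   | _, _ => F None
   end)%N.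
Proof.
case: a b => [g|] [h|] /=; first exact: sum_pred1_muln.
- by rewrite big_option /= mul1n big1 ?addn0.
- by rewrite big_option /= mul1n big1 ?addn0.
- by rewrite big_option addnC; under eq_bigr do rewrite mul1n.
Qed.

(* The (m1,m1), (m1,m2) and (m2,m2) entries of X^2 = \sum_g g + alpha X, for two
   orbits of sizes n_i whose stabilisers have orders h_i, and with c12 = s. *)
Lemma two_orbit_equationsP (N n1 n2 h1 h2 alpha c11 c22 s : nat) :
  0 < N -> h1 * n1 = N -> h2 * n2 = N ->
  [/\ 0 < s, h1 + alpha * c11 = n1 * (c11 * c11) + n2 * (s * s),
      alpha * s = n1 * (c11 * s) + n2 * (s * c22)
    & h2 + alpha * c22 = n1 * (s * s) + n2 * (c22 * c22)]
  <-> [/\ alpha = c11 * n1 + c22 * n2, N %| h1 * h2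
        & s ^ 2 = h1 * h2 %/ N + c11 * c22].
Proof.
move=> N_gt0 h1n1 h2n2.
have [h1_gt0 n1_gt0] : 0 < h1 /\ 0 < n1 by apply/andP; rewrite -muln_gt0 h1n1.
have [h2_gt0 n2_gt0] : 0 < h2 /\ 0 < n2 by apply/andP; rewrite -muln_gt0 h2n2.
split=> [[s_gt0 e11 e12 _] | [-> /dvdnP[q h1h2] sq]].
  have alphaE : alpha = c11 * n1 + c22 * n2.
    by apply/eqP; rewrite -(eqn_pmul2r s_gt0) e12; apply/eqP; nia.
  have key : h1 + n2 * (c11 * c22) = n2 * s ^ 2 by rewrite alphaE in e11; nia.
  have le_s2 : c11 * c22 <= s ^ 2 by rewrite -(leq_pmul2l n2_gt0) -key leq_addl.
  have h1E : h1 = n2 * (s ^ 2 - c11 * c22) by rewrite mulnBr -key addnK.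
  have h1h2 : h1 * h2 = (s ^ 2 - c11 * c22) * N by rewrite h1E -h2n2; nia.
  by rewrite h1h2 dvdn_mull // mulnK // subnK.
rewrite h1h2 mulnK // in sq.
have h1E : h1 = q * n2.
  by apply/eqP; rewrite -(eqn_pmul2r h2_gt0) h1h2 -h2n2; apply/eqP; nia.
have h2E : h2 = q * n1.
  by apply/eqP; rewrite -(eqn_pmul2l h1_gt0) h1h2 -h1n1; apply/eqP; nia.
rewrite h1E h2E; rewrite -mulnn in sq; split; nia.
Qed.

Lemma card_astab1_orbit (gT : finGroupType) (T : finType) (to : {action gT &-> T}) k :
  (#|'C[k | to]%g| * #|orbit to [set: gT] k| = #|gT|)%N.
Proof. by rewrite mulnC -cardsT -(card_orbit_stab to [set: gT] k) setTI. Qed.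

Lemma index_astab1 (gT : finGroupType) (T : finType) (to : {action gT &-> T}) k :
  #|[set: gT] : 'C[k | to]|%g = #|orbit to [set: gT] k|.
Proof. by rewrite card_orbit setTI. Qed.

Section PermutationRep.
Local Open Scope group_scope.

Variables (gT : finGroupType) (T : finType) (to : {action gT &-> T}).
Variable rho : option gT -> T -> T -> nat.
(* [to] is the right action [m |-> g^-1 |> m], so [g |> m_k = m_l] iff [to l g = k]. *)
Hypothesis rho_to : forall g k l, rho (Some g) k l = (to l g == k).

Local Notation X := (rho None).
Local Notation orb := (orbit to [set: gT]).

Lemma G_orb_to k l : G_orb rho k l = (l \in orb k).
Proof.
rewrite orbit_sym; apply/existsP/orbitP => [[g]|[g _ <-]].
  by rewrite rho_to eqb0 negbK => /eqP <-; exists g; rewrite ?inE.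
by exists g; rewrite rho_to eqxx.
Qed.

Lemma G_stab_to k : G_stab rho k = 'C[k | to].
Proof. by apply/setP => g; rewrite inE rho_to eqb0 negbK; apply/eqP/astab1P. Qed.

Lemma sum_rho_group k l :
  (\sum_g rho (Some g) k l = if k \in orb l then #|'C[l | to]| else 0)%N.
Proof.
have -> : (\sum_g rho (Some g) k l = #|amove to [set: gT] l k|)%N.
  rewrite -sum1_card [RHS]big_mkcond; apply: eq_bigr => g _.
  by rewrite rho_to !inE; case: (_ == _).
case: orbitP => [[a _ <-] | no_a].
  by rewrite amove_act ?subsetT ?inE // card_rcoset setTI.
apply/eqP; rewrite cards_eq0; apply/eqP/setP => g; rewrite !inE.
by apply/negbTE/eqP => tlg; apply: no_a; exists g; rewrite ?inE.
Qed.

Lemma eq_act_inv x a y : (to x a == y) = (x == to y a^-1).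
Proof. by apply/eqP/eqP => [<-|->]; rewrite ?actK ?actKV. Qed.

Lemma sum_rho_group_act k l a b :
  (\sum_g rho (Some g) (to k a) (to l b) = \sum_g rho (Some g) k l)%N.
Proof.
by rewrite !sum_rho_group orbit_act ?inE // orbit_actr ?inE // astab1_act cardJg.
Qed.

Section TwoOrbits.

Variables m1 m2 : T.
Hypothesis two_orb : two_orbits rho m1 m2.
Hypothesis X_sym : forall k l, X k l = X l k.
Hypothesis X_to : forall g k l, X k (to l g) = X k l.

Local Notation O1 := (orb m1).
Local Notation O2 := (orb m2).

Lemma X_tol g k l : X (to k g) l = X k l.
Proof. by rewrite X_sym X_to X_sym. Qed.

Lemma X_orbit k k' l l' : k' \in orb k -> l' \in orb l -> X k' l' = X k l.
Proof. by case/orbitP => a _ <- /orbitP[b _ <-]; rewrite X_tol X_to. Qed.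

Lemma m2_notin_orbit1 : (m2 \in O1) = false.
Proof. by case: two_orb; rewrite G_orb_to => /negbTE. Qed.

Lemma m1_notin_orbit2 : (m1 \in O2) = false.
Proof. by rewrite orbit_sym m2_notin_orbit1. Qed.

Lemma notin_orbit1 k : (k \notin O1) = (k \in O2).
Proof.
case k1: (k \in O1) => /=; last by move: (two_orb.2 k); rewrite !G_orb_to k1.
apply/esym/negP => k2; have := m2_notin_orbit1.
by rewrite -(orbit_transl m1 k2) k1.
Qed.

Lemma mem_orbit_two k l : (l \in orb k) = ((k \in O1) == (l \in O1)).
Proof.
have orbE x : orb x = if x \in O1 then O1 else O2.
  case: ifP => [/orbit_eqP // | /negbT]; by rewrite notin_orbit1 => /orbit_eqP.
rewrite [orb k]orbE; case: (k \in O1); case l1: (l \in O1) => //=.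
all: by rewrite -notin_orbit1 l1.
Qed.

Lemma orbit_two_cases k : exists a, k = to m1 a \/ k = to m2 a.
Proof.
move: (two_orb.2 k); rewrite !G_orb_to.
by case/orP => /orbitP[a _ <-]; exists a; [left | right].
Qed.

Lemma X_block : X_action_is rho m1 (X m1 m1) (X m1 m2) (X m2 m2).
Proof.
move=> k l; rewrite !G_orb_to.
have mem2 x : x \notin O1 -> x \in O2 by rewrite notin_orbit1.
case: ifP => [k1|/negbT/mem2 k1]; case: ifP => [l1|/negbT/mem2 l1];
  by rewrite (X_orbit k1 l1) // X_sym.
Qed.

Lemma sum_X_two_orbits k l :
  (\sum_j X k j * X j l = #|O1| * (X k m1 * X m1 l) + #|O2| * (X k m2 * X m2 l))%N.
Proof.
rewrite (bigID (mem O1)) /= -!sum_nat_const; congr (_ + _).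
  apply: eq_bigr => j j1.
  by rewrite (X_orbit (orbit_refl _ _ k) j1) (X_orbit j1 (orbit_refl _ _ l)).
apply: eq_big => [j | j]; first by rewrite notin_orbit1.
rewrite notin_orbit1 => j2.
by rewrite (X_orbit (orbit_refl _ _ k) j2) (X_orbit j2 (orbit_refl _ _ l)).
Qed.

Lemma NIM_irreducible_two_orbits : NIM_irreducible rho <-> (0 < X m1 m2)%N.
Proof.
split=> [[_ irr] | s_gt0].
  rewrite lt0n; apply/negP => /eqP s0.
  have closed b k l : k \in O1 -> rho b k l != 0%N -> l \in O1.
    case: b => [g|] k1.
      by rewrite rho_to eqb0 negbK => /eqP lk; move: k1; rewrite -lk orbit_actr ?inE.
    by apply: contraR => /negbTE l1; rewrite X_block !G_orb_to k1 l1 s0.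
  have [/setP/(_ m1) | /setP/(_ m2)] := irr O1 closed.
    by rewrite inE orbit_refl.
  by rewrite inE m2_notin_orbit1.
split; first by apply/card_gt0P; exists m1.
move=> S closed; have [-> | [k kS]] := set_0Vmem S; [by left | right].
apply/setP => l; rewrite inE.
have [/orbitP[a _ <-] | lk] := boolP (l \in orb k).
  by apply: (closed (Some a^-1) k); rewrite // rho_to actK eqxx.
apply: (closed None k) => //; rewrite X_block !G_orb_to -lt0n.
by move: lk; rewrite mem_orbit_two; case: (k \in O1); case: (l \in O1).
Qed.

Lemma isNIMrep_two_orbits alpha :
  isNIMrep alpha rho <->
  [/\ #|'C[m1 | to]| + alpha * X m1 m1
        = #|O1| * (X m1 m1 * X m1 m1) + #|O2| * (X m1 m2 * X m1 m2),
      alpha * X m1 m2 = #|O1| * (X m1 m1 * X m1 m2) + #|O2| * (X m1 m2 * X m2 m2)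
    & #|'C[m2 | to]| + alpha * X m2 m2
        = #|O1| * (X m1 m2 * X m1 m2) + #|O2| * (X m2 m2 * X m2 m2)]%N.
Proof.
split=> [rhoN | [e11 e12 e22]].
  have law k l : (\sum_g rho (Some g) k l + alpha * X k l = \sum_j X k j * X j l)%N.
    by move: (nim_mul rhoN None None k l); rewrite sum_ng_N.
  move: (law m1 m1) (law m1 m2) (law m2 m2).
  by rewrite !sum_rho_group !sum_X_two_orbits !orbit_refl m1_notin_orbit2 [X m2 m1]X_sym.
split=> [k l | [g|] [h|] k l | [g|] k l /=]; rewrite ?sum_ng_N.
- by rewrite rho_to act1 eq_sym.
- rewrite rho_to actM; under eq_bigr => j _ do rewrite !rho_to mulnC eq_sym.
  by rewrite sum_pred1_muln.
- under eq_bigr => j _ do rewrite rho_to mulnC eq_sym.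
  by rewrite sum_pred1_muln X_to.
- under eq_bigr => j _ do rewrite rho_to eq_act_inv.
  by rewrite sum_pred1_muln X_tol.
- (* both sides are invariant under the action in k and in l *)
  have [a [-> | ->]] := orbit_two_cases k; have [b [-> | ->]] := orbit_two_cases l;
  rewrite sum_rho_group_act sum_X_two_orbits !X_tol !X_to sum_rho_group;
  by rewrite ?orbit_refl ?m1_notin_orbit2 ?m2_notin_orbit1 ?[X m2 m1]X_sym; lia.
- by rewrite !rho_to eq_act_inv eq_sym.
- exact: X_sym.
Qed.

End TwoOrbits.

End PermutationRep.

Section NIMrepAction.
Local Open Scope group_scope.

Variables (gT : finGroupType) (alpha : nat) (T : finType).
Variable rho : option gT -> T -> T -> nat.
Hypothesis rhoN : isNIMrep alpha rho.

Lemma rho_groupM g h k l :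
  rho (Some (g * h)) k l = (\sum_j rho (Some h) k j * rho (Some g) j l)%N.
Proof. by move: (nim_mul rhoN (Some g) (Some h) k l); rewrite sum_ng_N. Qed.

(* Adjointness makes rho (g^-1) the transpose of rho g, hence its inverse: rho g is
   an orthogonal matrix over nat, i.e. a permutation matrix. *)
Lemma sum_rho_group_col_sqr g l :
  (\sum_k rho (Some g) k l * rho (Some g) k l = 1)%N.
Proof.
have := rho_groupM g g^-1 l l; rewrite mulgV (nim_unit rhoN) eqxx => /= ->.
by apply: eq_bigr => k _; rewrite [rho (Some g^-1) l k](nim_adj rhoN) /= invgK.
Qed.

Definition nim_to (l : T) (g : gT) : T := odflt l [pick k | rho (Some g) k l != 0%N].

Lemma rho_group_nim_to g k l : rho (Some g) k l = (nim_to l g == k).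
Proof.
have /sum_nat_eq1[k0 [_ /eqP sqr1 sqr0]] := introT eqP (sum_rho_group_col_sqr g l).
have rhoE j : rho (Some g) j l = (j == k0).
  have [-> | /sqr0] := eqVneq j k0.
    by move: sqr1; rewrite muln_eq1 => /andP[/eqP].
  by move=> /(_ isT)/eqP; rewrite muln_eq0 orbb => /eqP.
suff -> : nim_to l g = k0 by rewrite rhoE eq_sym.
rewrite /nim_to; case: pickP => [j | /(_ k0)]; rewrite rhoE ?eqxx //.
by rewrite eqb0 negbK => /eqP.
Qed.

Lemma nim_to1 : nim_to^~ 1 =1 id.
Proof.
move=> l; apply/eqP; move: (rho_group_nim_to 1 l l).
by rewrite (nim_unit rhoN) eqxx; case: eqP.
Qed.

Lemma nim_toM l : act_morph nim_to l.
Proof.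
move=> g h; have E k : (nim_to l (g * h) == k) = (nim_to (nim_to l g) h == k) :> nat.
  rewrite -rho_group_nim_to rho_groupM.
  under eq_bigr => j _ do rewrite !rho_group_nim_to mulnC eq_sym.
  by rewrite sum_pred1_muln.
by move: (E (nim_to (nim_to l g) h)); rewrite !eqxx; case: eqP.
Qed.

Definition nim_action := TotalAction nim_to1 nim_toM.

Lemma rho_nim_action g k l : rho (Some g) k l = (nim_action l g == k).
Proof. exact: rho_group_nim_to. Qed.

Lemma X_nim_action g k l : rho None k (nim_action l g) = rho None k l.
Proof.
move: (nim_mul rhoN (Some g) None k l); rewrite sum_ng_N => ->.
under eq_bigr => j _ do rewrite rho_nim_action eq_sym mulnC.
by rewrite sum_pred1_muln.
Qed.

End NIMrepAction.

Section RcosetAction.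
Local Open Scope group_scope.

Variables (gT : finGroupType) (H : {group gT}).

Definition rcoset_space := {A : {set gT} | A \in rcosets H [set: gT]}.

Lemma rcosets_mulr A g : A \in rcosets H [set: gT] -> A :* g \in rcosets H [set: gT].
Proof.
case/rcosetsP => x _ ->; rewrite -rcosetM.
by apply/rcosetsP; exists (x * g); rewrite ?inE.
Qed.

Definition rcoset_act (A : rcoset_space) g : rcoset_space :=
  exist _ (val A :* g) (rcosets_mulr g (valP A)).

Lemma rcoset_act1 : rcoset_act^~ 1 =1 id.
Proof. by move=> A; apply: val_inj; rewrite /= rcoset1. Qed.

Lemma rcoset_actM A : act_morph rcoset_act A.
Proof. by move=> g h; apply: val_inj; rewrite /= rcosetM. Qed.

Definition rcoset_action := TotalAction rcoset_act1 rcoset_actM.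

Lemma group_in_rcosets : (H : {set gT}) \in rcosets H [set: gT].
Proof. by apply/rcosetsP; exists 1; rewrite ?inE ?rcoset1. Qed.

Definition rcoset_base : rcoset_space := exist _ (H : {set gT}) group_in_rcosets.

Lemma orbit_rcoset_base A : A \in orbit rcoset_action [set: gT] rcoset_base.
Proof.
case: A => A /[dup] /rcosetsP[x _ Ax] A_in; apply/orbitP; exists x; rewrite ?inE //.
by apply: val_inj; rewrite /= Ax.
Qed.

Lemma astab1_rcoset_base : 'C[rcoset_base | rcoset_action] = H.
Proof.
apply/setP => g; apply/astab1P/idP => [/(congr1 val) /= Hg | /rcoset_id Hg].
  by rewrite -Hg rcoset_refl.
by apply: val_inj; rewrite /= Hg.
Qed.

End RcosetAction.

Section SumAction.
Local Open Scope group_scope.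

Variables (gT : finGroupType) (T1 T2 : finType).
Variables (to1 : {action gT &-> T1}) (to2 : {action gT &-> T2}).

Definition sum_act (k : T1 + T2) g : T1 + T2 :=
  match k with inl x => inl (to1 x g) | inr y => inr (to2 y g) end.

Lemma sum_act1 : sum_act^~ 1 =1 id.
Proof. by case=> x /=; rewrite act1. Qed.

Lemma sum_actM k : act_morph sum_act k.
Proof. by case: k => x g h /=; rewrite actM. Qed.

Definition sum_action := TotalAction sum_act1 sum_actM.

Lemma astab1_sum_inl x : 'C[inl x | sum_action] = 'C[x | to1].
Proof. by apply/setP => g; apply/astab1P/astab1P => /= [[]|->]. Qed.

Lemma astab1_sum_inr y : 'C[inr y | sum_action] = 'C[y | to2].
Proof. by apply/setP => g; apply/astab1P/astab1P => /= [[]|->]. Qed.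

End SumAction.

Section CosetModel.
Local Open Scope group_scope.

Variables (gT : finGroupType) (H1 H2 : {group gT}) (c11 c12 c22 : nat).

Local Notation T := (rcoset_space H1 + rcoset_space H2)%type.

Definition coset_action := sum_action (rcoset_action H1) (rcoset_action H2).

Definition block_X (k l : T) : nat :=
  match k, l with
  | inl _, inl _ => c11
  | inr _, inr _ => c22
  | _, _ => c12
  end.

Definition coset_rep (b : option gT) (k l : T) : nat :=
  if b is Some g then coset_action l g == k else block_X k l.

Definition coset_m1 : T := inl (rcoset_base H1).
Definition coset_m2 : T := inr (rcoset_base H2).

Lemma coset_rep_to g k l : coset_rep (Some g) k l = (coset_action l g == k).
Proof. by []. Qed.

Lemma block_X_sym k l : block_X k l = block_X l k.
Proof. by case: k l => x [] y. Qed.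

Lemma block_X_to g k l : block_X k (coset_action l g) = block_X k l.
Proof. by case: k l => x [] y. Qed.

Lemma two_orbits_coset_rep : two_orbits coset_rep coset_m1 coset_m2.
Proof.
split=> [|k]; rewrite !(G_orb_to coset_rep_to); first by apply/orbitP => -[].
case: k => A; apply/orP; [left | right]; have /orbitP[x _ <-] := orbit_rcoset_base A;
  by apply/orbitP; exists x; rewrite ?inE.
Qed.

Lemma astab1_coset_m1 : 'C[coset_m1 | coset_action] = H1.
Proof. by rewrite astab1_sum_inl astab1_rcoset_base. Qed.

Lemma astab1_coset_m2 : 'C[coset_m2 | coset_action] = H2.
Proof. by rewrite astab1_sum_inr astab1_rcoset_base. Qed.

End CosetModel.

Theorem proposition3p15 (gT : finGroupType) (alpha : nat) :
  (* every irreducible NIM-rep with two G-orbits yields such a tuple *)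
  (forall (T : finType) (rho : option gT -> T -> T -> nat) (m1 m2 : T),
     isNIMrep alpha rho -> NIM_irreducible rho -> two_orbits rho m1 m2 ->
     exists c11 c22 s : nat,
       [/\ alpha = (c11 * (#|[set: gT] : G_stab rho m1|)%g
                    + c22 * (#|[set: gT] : G_stab rho m2|)%g)%N,
           (#|gT| %| #|G_stab rho m1| * #|G_stab rho m2|)%N,
           (s ^ 2 = #|G_stab rho m1| * #|G_stab rho m2| %/ #|gT| + c11 * c22)%N
         & X_action_is rho m1 c11 s c22])
  /\
  (* every such tuple is realised by an irreducible NIM-rep with two G-orbits *)
  (forall (H1 H2 : {group gT}) (c11 c22 s : nat),
     alpha = (c11 * (#|[set: gT] : H1|)%g + c22 * (#|[set: gT] : H2|)%g)%N ->
     (#|gT| %| #|H1| * #|H2|)%N ->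
     (s ^ 2 = #|H1| * #|H2| %/ #|gT| + c11 * c22)%N ->
     exists (T : finType) (rho : option gT -> T -> T -> nat) (m1 m2 : T),
       [/\ isNIMrep alpha rho, NIM_irreducible rho, two_orbits rho m1 m2,
           G_stab rho m1 = H1 /\ G_stab rho m2 = H2
         & X_action_is rho m1 c11 s c22]).
Proof.
have gT_gt0 : (0 < #|gT|)%N by apply/card_gt0P; exists 1%g.
split=> [T rho m1 m2 rhoN irr two | H1 H2 c11 c22 s alphaE dvdN sqrE].
  have rho_to := rho_nim_action rhoN; have X_sym := nim_adj rhoN None.
  have X_to := X_nim_action rhoN.
  have s_gt0 := (NIM_irreducible_two_orbits rho_to two X_sym X_to).1 irr.
  have [e11 e12 e22] := (isNIMrep_two_orbits rho_to two X_sym X_to alpha).1 rhoN.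
  have [alphaE dvdN sqrE] := (two_orbit_equationsP alpha _ _ _ gT_gt0
    (card_astab1_orbit _ m1) (card_astab1_orbit _ m2)).1 (And4 s_gt0 e11 e12 e22).
  exists (rho None m1 m1), (rho None m2 m2), (rho None m1 m2).
  rewrite !(G_stab_to rho_to) !index_astab1; split=> //.
  exact: (X_block rho_to two X_sym X_to).
have rho_to := @coset_rep_to _ H1 H2 c11 s c22.
have two := two_orbits_coset_rep H1 H2 c11 s c22.
have X_sym := @block_X_sym _ H1 H2 c11 s c22; have X_to := @block_X_to _ H1 H2 c11 s c22.
have lagrange (H : {group gT}) : (#|H| * #|[set: gT] : H|%g = #|gT|)%N.
  by rewrite Lagrange ?subsetT ?cardsT.
have [s_gt0 e11 e12 e22] := (two_orbit_equationsP alpha c11 c22 s gT_gt0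
  (lagrange H1) (lagrange H2)).2 (And3 alphaE dvdN sqrE).
exists _, (@coset_rep _ H1 H2 c11 s c22), (coset_m1 H1 H2), (coset_m2 H1 H2); split.
- apply/(isNIMrep_two_orbits rho_to two X_sym X_to).
  by rewrite -!index_astab1 astab1_coset_m1 astab1_coset_m2.
- exact/(NIM_irreducible_two_orbits rho_to two X_sym X_to).
- exact: two.
- by rewrite !(G_stab_to rho_to) astab1_coset_m1 astab1_coset_m2.
- exact: (X_block rho_to two X_sym X_to).
Qed.
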